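(* Let $A = \langle Q, \delta, \gamma, F\rangle$ be a pomset automaton that is well-nested and finitely supported. Then for every state $q \in Q$ there exists a series-parallel rational expression $e_q$ such that $[\![ e_q ]\!] = L_A(q)$.
   Context: Fix a finite alphabet $\Sigma$. A pomset is an isomorphism class of labelled posets $\langle C, \leq, \lambda\rangle$ with $\lambda: C \to \Sigma$; $1$ is the empty pomset and $a\in\Sigma$ denotes the one-point pomset labelled $a$. For pomsets $U,V$ (with disjoint carriers) the sequential composition $U\cdot V$ has carrier $C_U\cup C_V$, order ${\leq_U}\cup{\leq_V}\cup(C_U\times C_V)$ and the union labelling; the parallel composition $U\parallel V$ is the same but with order ${\leq_U}\cup{\leq_V}$. The set $\mathsf{Pom}^{\mathsf{sp}}$ of series-parallel pomsets is the smallest set of pomsets containing $1$ and all $a\in\Sigma$ and closed under $\cdot$ and $\parallel$. For pomset languages, $\mathcal U\cdot\mathcal V=\{U\cdot V\}$, $\mathcal U\parallel\mathcal V=\{U\parallel V\}$, $\mathcal U^*=\bigcup_n\mathcal U^n$ and $\mathcal U^\dagger=\bigcup_n \mathcal U^{(n)}$, where $\mathcal U^0=\mathcal U^{(0)}=\{1\}$, $\mathcal U^{n+1}=\mathcal U\cdot\mathcal U^n$, $\mathcal U^{(n+1)}=\mathcal U\parallel\mathcal U^{(n)}$. Series-parallel rational expressions (spr-expressions) are given by $e,f ::= 0 \mid 1 \mid a\in\Sigma \mid e+f \mid e\cdot f \mid e\parallel f \mid e^* \mid e^\dagger$, with semantics $[\![0]\!]=\emptyset$, $[\![1]\!]=\{1\}$,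 $[\![a]\!]=\{a\}$, $[\![e+f]\!]=[\![e]\!]\cup[\![f]\!]$, $[\![e\cdot f]\!]=[\![e]\!]\cdot[\![f]\!]$, $[\![e\parallel f]\!]=[\![e]\!]\parallel[\![f]\!]$, $[\![e^*]\!]=[\![e]\!]^*$, $[\![e^\dagger]\!]=[\![e]\!]^\dagger$. A pomset automaton (PA) is $A=\langle Q,\delta,\gamma,F\rangle$ with $F\subseteq Q$ the accepting states, $\delta: Q\times\Sigma\to Q$ and $\gamma: Q\times Q\times Q\to Q$. Every PA is assumed to contain states $\bot\in Q\setminus F$ and $\top\in F$ with $\delta(\bot,a)=\delta(\top,a)=\bot$ and $\gamma(\bot,r,s)=\gamma(\top,r,s)=\bot$ for all $a,r,s$. The trace relation ${\to_A}\subseteq Q\times\mathsf{Pom}^{\mathsf{sp}}\times Q$ is the smallest relation with: $q\xrightarrow{1}_A q$; $q\xrightarrow{a}_A\delta(q,a)$; if $q\xrightarrow{U}_A q''$ and $q''\xrightarrow{V}_A q'$ then $q\xrightarrow{U\cdot V}_A q'$; if $r\xrightarrow{U}_A r'\in F$ and $s\xrightarrow{V}_A s'\in F$ then $q\xrightarrow{U\parallel V}_A\gamma(q,r,s)$. The language of $q$ is $L_A(q)=\{U : \exists q'\in F.\ q\xrightarrow{U}_A q'\}$. The trace dependency relation $\preceq_A$ is the smallest preorder on $Q$ such that $r,s\preceq_A q$ whenever $\gamma(q,r,s)\neq\bot$, $\delta(q,a)\preceq_A q$ for all $a$, and $\gamma(q,r,s)\preceq_A q$ for all $r,s$. Write $q\prec_A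 q'$ iff $q\preceq_A q'$ and $q'\not\preceq_A q$. The support $\pi_A(q)$ is the smallest $\preceq_A$-downward-closed subset of $Q$ containing $q$; $A$ is finitely supported if every $\pi_A(q)$ is finite. A state $q$ is sequential if $r,s\prec_A q$ whenever $\gamma(q,r,s)\neq\bot$. A state $q\in F$ is recursive if it is not sequential, $\delta(q,a)=\bot$ for all $a\in\Sigma$, and whenever $\gamma(q,r,s)\neq\bot$ we have $s=q$, $r\prec_A q$ and $\gamma(q,r,s)=\top$. $A$ is well-nested if every state is sequential or recursive. *)

From Stdlib Require List.
From mathcomp Require Import all_boot.
Set Implicit Arguments.
Unset Strict Implicit.
Unset Printing Implicit Defensive.

(* Pomsets are isomorphism classes of these; pomset languages are represented by
   predicates on representatives, and every construction below is closed under
   isomorphism, so such predicates denote sets of isomorphism classes. *)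
Record lposet (Sigma : Type) := LPoset {
  lp_size : nat;
  lp_ord : rel 'I_lp_size;
  lp_lab : 'I_lp_size -> Sigma }.

Section Pomsets.
Variable Sigma : Type.
Implicit Types U V W : lposet Sigma.

Definition is_poset U : Prop :=
  [/\ reflexive (@lp_ord _ U), antisymmetric (@lp_ord _ U) & transitive (@lp_ord _ U)].

Definition lp_iso U V : Prop :=
  exists f : 'I_(lp_size U) -> 'I_(lp_size V),
    [/\ bijective f,
        (forall i j, lp_ord i j = lp_ord (f i) (f j)) &
        (forall i, lp_lab i = lp_lab (f i))].

Definition I0_elim (T : Type) (i : 'I_0) : T.
Proof. by case: i. Defined.

Definition lp_unit : lposet Sigma :=
  @LPoset Sigma 0 (fun _ _ => true) (@I0_elim Sigma).

Definition lp_atom (a : Sigma) : lposet Sigma :=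
  @LPoset Sigma 1 (fun _ _ => true) (fun _ => a).

Definition lp_seq U V : lposet Sigma :=
  @LPoset Sigma (lp_size U + lp_size V)
    (fun i j => match split i, split j with
                | inl i', inl j' => lp_ord i' j'
                | inr i', inr j' => lp_ord i' j'
                | inl _, inr _ => true
                | inr _, inl _ => false
                end)
    (fun i => match split i with inl i' => lp_lab i' | inr i' => lp_lab i' end).

Definition lp_par U V : lposet Sigma :=
  @LPoset Sigma (lp_size U + lp_size V)
    (fun i j => match split i, split j with
                | inl i', inl j' => lp_ord i' j'
                | inr i', inr j' => lp_ord i' j'
                | _, _ => false
                end)
    (fun i => match split i with inl i' => lp_lab i' | inr i' => lp_lab i' end).

Definition lang := lposet Sigma -> Prop.

Definition lang_unit : lang := fun U => lp_iso U lp_unit.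
Definition lang_seq (L1 L2 : lang) : lang :=
  fun U => exists V W, [/\ L1 V, L2 W & lp_iso U (lp_seq V W)].
Definition lang_par (L1 L2 : lang) : lang :=
  fun U => exists V W, [/\ L1 V, L2 W & lp_iso U (lp_par V W)].

Fixpoint lang_seqpow (L : lang) (n : nat) : lang :=
  if n is n'.+1 then lang_seq L (lang_seqpow L n') else lang_unit.
Fixpoint lang_parpow (L : lang) (n : nat) : lang :=
  if n is n'.+1 then lang_par L (lang_parpow L n') else lang_unit.

Definition lang_star (L : lang) : lang := fun U => exists n, lang_seqpow L n U.
Definition lang_dagger (L : lang) : lang := fun U => exists n, lang_parpow L n U.

End Pomsets.

Inductive spr (Sigma : Type) :=
| sZero
| sOne
| sAtom of Sigma
| sPlus of spr Sigma & spr Sigma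
| sSeq of spr Sigma & spr Sigma
| sPar of spr Sigma & spr Sigma
| sStar of spr Sigma
| sDagger of spr Sigma.
Arguments sZero {Sigma}.
Arguments sOne {Sigma}.

Fixpoint spr_sem (Sigma : Type) (e : spr Sigma) : lang Sigma :=
  match e with
  | sZero => fun _ => False
  | sOne => @lang_unit Sigma
  | sAtom a => fun U => lp_iso U (lp_atom a)
  | sPlus e f => fun U => spr_sem e U \/ spr_sem f U
  | sSeq e f => lang_seq (spr_sem e) (spr_sem f)
  | sPar e f => lang_par (spr_sem e) (spr_sem f)
  | sStar e => lang_star (spr_sem e)
  | sDagger e => lang_dagger (spr_sem e)
  end.

Record PA (Sigma : finType) := MkPA {
  pa_state : Type;
  pa_delta : pa_state -> Sigma -> pa_state;
  pa_gamma : pa_state -> pa_state -> pa_state -> pa_state;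
  pa_final : pa_state -> Prop;
  pa_bot : pa_state;
  pa_top : pa_state;
  pa_bot_nfinal : ~ pa_final pa_bot;
  pa_top_final : pa_final pa_top;
  pa_delta_bot : forall a, pa_delta pa_bot a = pa_bot;
  pa_delta_top : forall a, pa_delta pa_top a = pa_bot;
  pa_gamma_bot : forall r s, pa_gamma pa_bot r s = pa_bot;
  pa_gamma_top : forall r s, pa_gamma pa_top r s = pa_bot }.

Section PAtheory.
Variables (Sigma : finType) (A : PA Sigma).
Local Notation Q := (pa_state A).
Local Notation delta := (@pa_delta _ A).
Local Notation gamma := (@pa_gamma _ A).
Local Notation F := (@pa_final _ A).
Local Notation bot := (pa_bot A).
Local Notation top := (pa_top A).

Inductive trace : Q -> lposet Sigma -> Q -> Prop :=
| tr_unit q U : lp_iso U (lp_unit Sigma) -> trace q U q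
| tr_atom q a U : lp_iso U (lp_atom a) -> trace q U (delta q a)
| tr_seq q q'' q' U V W :
    trace q V q'' -> trace q'' W q' -> lp_iso U (lp_seq V W) -> trace q U q'
| tr_par q r r' s s' U V W :
    trace r V r' -> F r' -> trace s W s' -> F s' ->
    lp_iso U (lp_par V W) -> trace q U (gamma q r s).

Definition pa_lang (q : Q) : lang Sigma :=
  fun U => exists q', F q' /\ trace q U q'.

(* trace dependency preorder: dep q' q  means  q' ≼_A q *)
Inductive dep : Q -> Q -> Prop :=
| dep_refl q : dep q q
| dep_trans q1 q2 q3 : dep q1 q2 -> dep q2 q3 -> dep q1 q3
| dep_left q r s : gamma q r s <> bot -> dep r q
| dep_right q r s : gamma q r s <> bot -> dep s q
| dep_delta q a : dep (delta q a) q
| dep_gamma q r s : dep (gamma q r s) q.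

Definition sdep (q q' : Q) : Prop := dep q q' /\ ~ dep q' q.

Definition down_closed (S : Q -> Prop) : Prop :=
  forall q q', S q -> dep q' q -> S q'.
Definition support (q : Q) : Q -> Prop :=
  fun q' => forall S, down_closed S -> S q -> S q'.

Definition finite_set (S : Q -> Prop) : Prop :=
  exists l : seq Q, forall x, S x -> List.In x l.

Definition finitely_supported : Prop := forall q, finite_set (support q).

Definition sequential (q : Q) : Prop :=
  forall r s, gamma q r s <> bot -> sdep r q /\ sdep s q.

Definition recursive (q : Q) : Prop :=
  [/\ F q, ~ sequential q, (forall a, delta q a = bot) &
      (forall r s, gamma q r s <> bot -> [/\ s = q, sdep r q & gamma q r s = top])].

Definition well_nested : Prop := forall q, sequential q \/ recursive q.

End PAtheory.

(* Induction along the strict trace-dependency order, which is well founded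
   below every state because supports are finite.  A recursive state p can only
   fork into r || p and then stop in top, so L(p) = (U_r L(r))^dagger with every
   r strictly below p.  If p is sequential (and not bot), so is every state of
   its strongly connected component, hence each fork there goes to states
   strictly below p.  L(p) is then the language of walks inside the component,
   along single letters and single forks, that leave it at a final state or by
   one step to a state strictly below p; a walk language with finitely many
   states and expressible edge labels is expressible by state elimination. *)

From Pilot Require Import Defs.
From mathcomp Require Import all_boot.
From Stdlib Require Import Classical ClassicalEpsilon.

Set Implicit Arguments.
Unset Strict Implicit.
Unset Printing Implicit Defensive.

Section LposetIso.
Variable Sigma : Type.
Implicit Types U V W : lposet Sigma.

Lemma lp_iso_refl U : lp_iso U U.
Proof. by exists id; split=> //; exists id. Qed.

Lemma lp_iso_sym U V : lp_iso U V -> lp_iso V U.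
Proof.
case=> f [[g fK gK] f_ord f_lab]; exists g; split.
- by exists f.
- by move=> i j; rewrite f_ord !gK.
- by move=> i; rewrite f_lab gK.
Qed.

Lemma lp_iso_trans U V W : lp_iso U V -> lp_iso V W -> lp_iso U W.
Proof.
case=> f [[f' fK f'K] f_ord f_lab] [g [[g' gK g'K] g_ord g_lab]].
exists (g \o f); split.
- by exists (f' \o g') => i /=; rewrite ?fK ?gK ?g'K ?f'K.
- by move=> i j; rewrite f_ord g_ord.
- by move=> i; rewrite f_lab g_lab.
Qed.

Lemma split_lshift m n (i : 'I_m) : split (lshift n i) = inl i.
Proof. exact: (unsplitK (inl i)). Qed.

Lemma split_rshift m n (i : 'I_n) : split (rshift m i) = inr i.
Proof. exact: (unsplitK (inr i)). Qed.

Lemma split_inlK m n (i : 'I_(m + n)) j : split i = inl j -> lshift n j = i.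
Proof. by move=> E; rewrite -[RHS]splitK E. Qed.

Lemma split_inrK m n (i : 'I_(m + n)) j : split i = inr j -> rshift m j = i.
Proof. by move=> E; rewrite -[RHS]splitK E. Qed.

Definition sum_ord_map m n m' n' (f : 'I_m -> 'I_m') (g : 'I_n -> 'I_n')
    (i : 'I_(m + n)) : 'I_(m' + n') :=
  match split i with inl i' => lshift n' (f i') | inr i' => rshift m' (g i') end.

Lemma split_sum_ord_map m n m' n' (f : 'I_m -> 'I_m') (g : 'I_n -> 'I_n') i :
  split (sum_ord_map f g i) =
  match split i with inl i' => inl (f i') | inr i' => inr (g i') end.
Proof. by rewrite /sum_ord_map; case: (split i) => i'; rewrite ?split_lshift ?split_rshift. Qed.

Lemma sum_ord_map_bij m n m' n' (f : 'I_m -> 'I_m') (g : 'I_n -> 'I_n') :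
  bijective f -> bijective g -> bijective (sum_ord_map f g).
Proof.
case=> f' fK f'K [g' gK g'K]; exists (sum_ord_map f' g') => i;
  by rewrite {1}/sum_ord_map split_sum_ord_map; case E: (split i) => [i'|i'];
     rewrite ?fK ?gK ?f'K ?g'K ?(split_inlK E) ?(split_inrK E).
Qed.

Lemma lp_iso_seq U U' V V' :
  lp_iso U U' -> lp_iso V V' -> lp_iso (lp_seq U V) (lp_seq U' V').
Proof.
case=> f [f_bij f_ord f_lab] [g [g_bij g_ord g_lab]].
exists (sum_ord_map f g); split; first exact: sum_ord_map_bij.
- move=> i j /=; rewrite !split_sum_ord_map.
  by case: (split i) => i'; case: (split j) => j'.
- by move=> i /=; rewrite split_sum_ord_map; case: (split i).
Qed.

Lemma lp_iso_seql U U' V : lp_iso U U' -> lp_iso (lp_seq U V) (lp_seq U' V).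
Proof. by move/lp_iso_seq; apply; apply: lp_iso_refl. Qed.

Lemma lp_iso_seqr U V V' : lp_iso V V' -> lp_iso (lp_seq U V) (lp_seq U V').
Proof. exact/lp_iso_seq/lp_iso_refl. Qed.

Definition ord_assocr a b c (i : 'I_(a + b + c)) : 'I_(a + (b + c)) :=
  match split i with
  | inl i' => match split i' with
              | inl u => lshift (b + c) u
              | inr v => rshift a (lshift c v) end
  | inr w => rshift a (rshift b w) end.

Definition ord_assocl a b c (i : 'I_(a + (b + c))) : 'I_(a + b + c) :=
  match split i with
  | inl u => lshift c (lshift b u)
  | inr i' => match split i' with
              | inl v => lshift c (rshift a v)
              | inr w => rshift (a + b) w end end.

Lemma lp_seqA U V W : lp_iso (lp_seq (lp_seq U V) W) (lp_seq U (lp_seq V W)).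
Proof.
exists (@ord_assocr _ _ _); split.
- exists (@ord_assocl _ _ _) => i.
  + rewrite /ord_assocr; case Ei: (split i) => [i'|w]; [case Ei': (split i') => [u|v]|];
      rewrite /ord_assocl !(split_lshift, split_rshift).
    * by rewrite (split_inlK Ei') (split_inlK Ei).
    * by rewrite (split_inrK Ei') (split_inlK Ei).
    * by rewrite (split_inrK Ei).
  + rewrite /ord_assocl; case Ei: (split i) => [u|i']; [|case Ei': (split i') => [v|w]];
      rewrite /ord_assocr !(split_lshift, split_rshift).
    * by rewrite (split_inlK Ei).
    * by rewrite (split_inlK Ei') (split_inrK Ei).
    * by rewrite (split_inrK Ei') (split_inrK Ei).
- move=> i j; rewrite /ord_assocr /=.
  case: (split i) => [i'|w]; [case: (split i') => [u|v]|];
  case: (split j) => [j'|w']; try case: (split j') => [u'|v'];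
  by rewrite /= !(split_lshift, split_rshift).
- move=> i; rewrite /ord_assocr /=.
  case: (split i) => [i'|w]; [case: (split i') => [u|v]|];
  by rewrite /= !(split_lshift, split_rshift).
Qed.

Lemma lp_seq1l U : lp_iso (lp_seq (lp_unit Sigma) U) U.
Proof.
exists (fun i => match split i with inl i' => I0_elim _ i' | inr i' => i' end); split.
- exists (fun i => rshift 0 i) => i; last by rewrite split_rshift.
  by case E: (split i) => [i'|i']; [exact: I0_elim _ i'|rewrite (split_inrK E)].
- by move=> i j /=; case: (split i) => i'; case: (split j) => j'; try exact: I0_elim.
- by move=> i /=; case: (split i) => i'; first exact: I0_elim.
Qed.

Lemma lp_seq1r U : lp_iso (lp_seq U (lp_unit Sigma)) U.
Proof.
exists (fun i => match split i with inl i' => i' | inr i' => I0_elim _ i' end); split.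
- exists (fun i => lshift 0 i) => i; last by rewrite split_lshift.
  by case E: (split i) => [i'|i']; [rewrite (split_inlK E)|exact: I0_elim _ i'].
- by move=> i j /=; case: (split i) => i'; case: (split j) => j'; try exact: I0_elim.
- by move=> i /=; case: (split i) => i'; last exact: I0_elim.
Qed.

End LposetIso.

Lemma mem_In (T : eqType) (s : seq T) x : x \in s -> List.In x s.
Proof. by elim: s => //= y s IH; rewrite in_cons => /orP [/eqP ->|/IH]; [left|right]. Qed.

Section Expressible.
Variable Sigma : Type.
Implicit Types (U V W : lposet Sigma) (L : lang Sigma).

Definition lang_eq L1 L2 := forall U, L1 U <-> L2 U.
Definition iso_closed L := forall U V, lp_iso U V -> L V -> L U.
Definition expressible L := exists e : spr Sigma, lang_eq (spr_sem e) L.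
Definition lang_union L1 L2 : lang Sigma := fun U => L1 U \/ L2 U.

Lemma lang_eq_sym L1 L2 : lang_eq L1 L2 -> lang_eq L2 L1.
Proof. by move=> E U; rewrite E. Qed.

Lemma lang_unit_iso_closed : iso_closed (@lang_unit Sigma).
Proof. by move=> U V UV; apply: lp_iso_trans. Qed.

Lemma lang_seq_iso_closed L1 L2 : iso_closed (lang_seq L1 L2).
Proof. by move=> U U' UU' [V [W [? ? ?]]]; exists V, W; split=> //; apply: lp_iso_trans UU' _. Qed.

Lemma lang_par_iso_closed L1 L2 : iso_closed (lang_par L1 L2).
Proof. by move=> U U' UU' [V [W [? ? ?]]]; exists V, W; split=> //; apply: lp_iso_trans UU' _. Qed.

Lemma lang_seqpow_iso_closed L n : iso_closed (lang_seqpow L n).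
Proof. by case: n => [|n]; [apply: lang_unit_iso_closed|apply: lang_seq_iso_closed]. Qed.

Lemma lang_parpow_iso_closed L n : iso_closed (lang_parpow L n).
Proof. by case: n => [|n]; [apply: lang_unit_iso_closed|apply: lang_par_iso_closed]. Qed.

Lemma spr_sem_iso_closed (e : spr Sigma) : iso_closed (spr_sem e).
Proof.
elim: e => /=.
- by [].
- exact: lang_unit_iso_closed.
- by move=> a U V UV; apply: lp_iso_trans.
- by move=> e1 IH1 e2 IH2 U V UV [/(IH1 _ _ UV)|/(IH2 _ _ UV)]; [left|right].
- by move=> *; apply: lang_seq_iso_closed.
- by move=> *; apply: lang_par_iso_closed.
- by move=> e _ U V UV [n Vn]; exists n; apply: lang_seqpow_iso_closed UV _.
- by move=> e _ U V UV [n Vn]; exists n; apply: lang_parpow_iso_closed UV _.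
Qed.

Lemma expressible_iso_closed L : expressible L -> iso_closed L.
Proof. by case=> e E U V UV /E /(spr_sem_iso_closed UV) /E. Qed.

Lemma expressible_eq L1 L2 : lang_eq L1 L2 -> expressible L1 -> expressible L2.
Proof. by move=> E [e He]; exists e => U; rewrite He. Qed.

Lemma lang_seq_eq L1 L1' L2 L2' :
  lang_eq L1 L1' -> lang_eq L2 L2' -> lang_eq (lang_seq L1 L2) (lang_seq L1' L2').
Proof.
by move=> E1 E2 U; split=> -[V [W [/E1 ? /E2 ? ?]]]; exists V, W.
Qed.

Lemma lang_par_eq L1 L1' L2 L2' :
  lang_eq L1 L1' -> lang_eq L2 L2' -> lang_eq (lang_par L1 L2) (lang_par L1' L2').
Proof.
by move=> E1 E2 U; split=> -[V [W [/E1 ? /E2 ? ?]]]; exists V, W.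
Qed.

Lemma expressible_empty : expressible (fun _ => False).
Proof. by exists sZero. Qed.

Lemma expressible_unit : expressible (@lang_unit Sigma).
Proof. by exists sOne. Qed.

Lemma expressible_atom a : expressible (fun U => lp_iso U (lp_atom a)).
Proof. by exists (sAtom a). Qed.

Lemma expressible_union L1 L2 :
  expressible L1 -> expressible L2 -> expressible (lang_union L1 L2).
Proof. by move=> [e1 E1] [e2 E2]; exists (sPlus e1 e2) => U /=; rewrite E1 E2. Qed.

Lemma expressible_seq L1 L2 :
  expressible L1 -> expressible L2 -> expressible (lang_seq L1 L2).
Proof. by move=> [e1 E1] [e2 E2]; exists (sSeq e1 e2); apply: lang_seq_eq. Qed.

Lemma expressible_par L1 L2 :
  expressible L1 -> expressible L2 -> expressible (lang_par L1 L2).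
Proof. by move=> [e1 E1] [e2 E2]; exists (sPar e1 e2); apply: lang_par_eq. Qed.

Lemma expressible_star L : expressible L -> expressible (lang_star L).
Proof.
move=> [e E]; exists (sStar e) => U /=.
have En n : lang_eq (lang_seqpow (spr_sem e) n) (lang_seqpow L n).
  by elim: n => [|n IHn] //=; apply: lang_seq_eq.
by split=> -[n /En]; exists n.
Qed.

Lemma expressible_dagger L : expressible L -> expressible (lang_dagger L).
Proof.
move=> [e E]; exists (sDagger e) => U /=.
have En n : lang_eq (lang_parpow (spr_sem e) n) (lang_parpow L n).
  by elim: n => [|n IHn] //=; apply: lang_par_eq.
by split=> -[n /En]; exists n.
Qed.

Lemma expressible_guard (P : Prop) L :
  (P -> expressible L) -> expressible (fun U => P /\ L U).
Proof.
case: (classic P) => [Pp /(_ Pp)|nP _].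
  by apply: expressible_eq => U; split=> [|[]].
by apply: expressible_eq expressible_empty => U; split=> [|[]].
Qed.

Lemma expressible_bigcup (T : Type) (P : T -> Prop) (Ls : T -> lang Sigma) (xs : seq T) :
  (forall x, P x -> List.In x xs) -> (forall x, P x -> expressible (Ls x)) ->
  expressible (fun U => exists x, P x /\ Ls x U).
Proof.
elim: xs P => [|x xs IH] P cover Ls_expr.
  by apply: expressible_eq expressible_empty => U; split=> // -[y [/cover []]].
have E : expressible (lang_union (fun U => P x /\ Ls x U)
                                 (fun U => exists y, (P y /\ List.In y xs) /\ Ls y U)).
  apply: expressible_union; first by apply: expressible_guard => /Ls_expr.
  by apply: IH => y [] // /Ls_expr.
apply: expressible_eq E => U; split.
- by case=> [[Px ?]|[y [[Py _] ?]]]; [exists x|exists y].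
- by case=> y [Py Ly]; case: (cover y Py) => [->|y_xs]; [left|right; exists y].
Qed.

End Expressible.

Section PathLanguage.
Variables (Sigma T : Type).
Implicit Types (U V W : lposet Sigma) (xs : seq T).

Inductive path_lang xs (lab : T -> T -> lang Sigma) (out : T -> lang Sigma) :
    T -> lang Sigma :=
| path_out x U : out x U -> path_lang xs lab out x U
| path_step x y V W U : List.In y xs -> lab x y V -> path_lang xs lab out y W ->
    lp_iso U (lp_seq V W) -> path_lang xs lab out x U.

Lemma path_lang_iso_closed xs lab out x :
  (forall y, iso_closed (out y)) -> iso_closed (path_lang xs lab out x).
Proof.
move=> out_closed U U' UU' p'; case: p' UU' => {x U'} [x U' o|x y V W U' y_xs l p iso] UU'.
- by apply: path_out; apply: out_closed o.
- by apply: path_step y_xs l p _; apply: lp_iso_trans iso.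
Qed.

Section Eliminate.
Variables (z : T) (xs : seq T) (lab : T -> T -> lang Sigma) (out : T -> lang Sigma).
Hypothesis out_closed : forall x, iso_closed (out x).

Definition bypass_lab x y : lang Sigma :=
  lang_union (lab x y) (lang_seq (lab x z) (lang_seq (lang_star (lab z z)) (lab z y))).

Definition bypass_out x : lang Sigma :=
  lang_union (out x) (lang_seq (lab x z) (lang_seq (lang_star (lab z z)) (out z))).

Local Notation path := (path_lang (z :: xs) lab out).
Local Notation bypass_path := (path_lang xs bypass_lab bypass_out).

Definition loop_lang : lang Sigma :=
  lang_seq (lang_star (lab z z))
    (lang_union (out z)
       (fun U => exists y, List.In y xs /\ lang_seq (lab z y) (bypass_path y) U)).

Lemma path_prepend_loops k W1 W2 U :
  lang_seqpow (lab z z) k W1 -> path z W2 -> lp_iso U (lp_seq W1 W2) -> path z U.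
Proof.
elim: k W1 W2 U => [|k IH] W1 W2 U /= W1k W2p UW.
- apply: path_lang_iso_closed W2p => //; apply: lp_iso_trans UW _.
  by apply: lp_iso_trans (lp_iso_seql _ W1k) _; apply: lp_seq1l.
- case: W1k => V [W1' [Vl W1'k W1V]].
  apply: (path_step (V := V) (W := lp_seq W1' W2) (List.in_eq _ _) Vl).
    exact: IH W1'k W2p (lp_iso_refl _).
  apply: lp_iso_trans UW _; apply: lp_iso_trans (lp_iso_seql _ W1V) _.
  exact: lp_seqA.
Qed.

Lemma path_cons_bypass x U :
  path x U -> (x <> z -> bypass_path x U) /\ (x = z -> loop_lang U).
Proof.
have unit_star : lang_star (lab z z) (lp_unit Sigma) by exists 0; apply: lp_iso_refl.
elim=> {x U} [x U o|x y V W U y_zxs Vl _ [IHz IHnz] UVW].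
  split=> [_|Exz]; first by apply: path_out; left.
  exists (lp_unit Sigma), U; split=> //; [by left; rewrite -Exz|exact/lp_iso_sym/lp_seq1l].
case: (classic (y = z)) => [Ey|y_nz].
- have [W1 [W2 [[k W1k] W2o WW]]] := IHnz Ey; split=> [x_nz|Exz].
  + case: W2o => [W2o|[y' [y'_xs [W3 [W4 [W3l W4p W2W]]]]]].
      apply: path_out; right; exists V, W; split=> //; first by rewrite -Ey.
      by exists W1, W2; split=> //; exists k.
    apply: (path_step (V := lp_seq V (lp_seq W1 W3)) (W := W4) y'_xs _ W4p).
      right; exists V, (lp_seq W1 W3); split; [by rewrite -Ey| |exact: lp_iso_refl].
      by exists W1, W3; split; [exists k|by []|exact: lp_iso_refl].
    apply: lp_iso_trans UVW _; apply: lp_iso_trans (lp_iso_seqr _ WW) _.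
    apply: lp_iso_trans (lp_iso_seqr _ (lp_iso_seqr _ W2W)) _.
    apply: lp_iso_trans (lp_iso_seqr _ (lp_iso_sym (lp_seqA _ _ _))) _.
    exact: lp_iso_sym (lp_seqA _ _ _).
  + exists (lp_seq V W1), W2; split=> //.
      by exists k.+1, V, W1; split; [rewrite -{1}Exz -Ey| |apply: lp_iso_refl].
    apply: lp_iso_trans UVW _; apply: lp_iso_trans (lp_iso_seqr _ WW) _.
    exact: lp_iso_sym (lp_seqA _ _ _).
- have y_xs : List.In y xs by case: y_zxs => // Ey; case: y_nz.
  have Wb := IHz y_nz; split=> [_|Exz].
    by apply: (path_step y_xs _ Wb UVW); left.
  exists (lp_unit Sigma), U; split=> //; last exact/lp_iso_sym/lp_seq1l.
  by right; exists y; split=> //; exists V, W; rewrite -Exz.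
Qed.

Lemma path_of_bypass_path x U : bypass_path x U -> path x U.
Proof.
elim=> {x U} [x U [o|o]|x y V W U y_xs [l|l] _ IH UVW].
- exact: path_out.
- case: o => V [W [Vl [W1 [W2 [[k W1k] W2o WW]]] UVW]].
  apply: (path_step (List.in_eq _ _) Vl _ UVW).
  by apply: (path_prepend_loops W1k _ WW); apply: path_out.
- exact: path_step (List.in_cons _ _ _ y_xs) l IH UVW.
- case: l => V1 [V' [V1l [V2 [V3 [[k V2k] V3l V'V]]] VV]].
  apply: (path_step (V := V1) (W := lp_seq V2 (lp_seq V3 W)) (List.in_eq _ _) V1l).
    apply: (path_prepend_loops V2k _ (lp_iso_refl _)).
    exact: path_step (List.in_cons _ _ _ y_xs) V3l IH (lp_iso_refl _).
  apply: lp_iso_trans UVW _; apply: lp_iso_trans (lp_iso_seql _ VV) _.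
  apply: lp_iso_trans (lp_seqA _ _ _) _; apply: lp_iso_seqr.
  by apply: lp_iso_trans (lp_iso_seql _ V'V) _; apply: lp_seqA.
Qed.

Lemma loop_lang_path U : loop_lang U -> path z U.
Proof.
case=> W1 [W2 [[k W1k] W2o UW]]; apply: (path_prepend_loops W1k _ UW).
case: W2o => [o|[y [y_xs [V [W [Vl Wp W2VW]]]]]]; first exact: path_out.
exact: path_step (List.in_cons _ _ _ y_xs) Vl (path_of_bypass_path Wp) W2VW.
Qed.

End Eliminate.

Theorem path_lang_expressible xs lab out :
  (forall x y, expressible (lab x y)) -> (forall x, expressible (out x)) ->
  forall x, expressible (path_lang xs lab out x).
Proof.
elim: xs lab out => [|z xs IH] lab out lab_expr out_expr x.
  apply: expressible_eq (out_expr x) => U; split; first exact: path_out.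
  by case=> //.
have out_closed (y : T) : iso_closed (out y) := expressible_iso_closed (out_expr y).
have star_expr := expressible_star (lab_expr z z).
have bypass_expr : forall x,
    expressible (path_lang xs (bypass_lab z lab) (bypass_out z lab out) x).
  apply: IH => [y y'|y]; apply: expressible_union => //;
    by do 2?apply: expressible_seq.
case: (classic (x = z)) => [->|x_nz].
  have : expressible (loop_lang z xs lab out).
    apply: expressible_seq => //; apply: expressible_union => //.
    by apply: (expressible_bigcup (xs := xs)) => // y _; apply: expressible_seq.
  apply: expressible_eq => U; split; first exact: loop_lang_path.
  by move/path_cons_bypass => [_]; apply.
apply: expressible_eq (bypass_expr x) => U; split; first exact: path_of_bypass_path.
by move/path_cons_bypass => [+ _]; apply.
Qed.

End PathLanguage.

Section PomsetAutomaton.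
Variables (Sigma : finType) (A : PA Sigma).
Local Notation Q := (pa_state A).
Local Notation delta := (@pa_delta _ A).
Local Notation gamma := (@pa_gamma _ A).
Local Notation F := (@pa_final _ A).
Local Notation bot := (pa_bot A).
Local Notation top := (pa_top A).
Local Notation L := (@pa_lang _ A).
Implicit Types (p q x y z r s : Q) (U V W : lposet Sigma).

Lemma down_closed_steps (S : Q -> Prop) :
  (forall q r s, gamma q r s <> bot -> S q -> S r /\ S s) ->
  (forall q a, S q -> S (delta q a)) -> (forall q r s, S q -> S (gamma q r s)) ->
  down_closed S.
Proof.
move=> S_par S_delta S_gamma z y Sz dep_yz; elim: dep_yz Sz => {y z} //.
- by move=> q1 q2 q3 _ IH1 _ IH2 /IH2 /IH1.
- by move=> q r s nbot /(S_par _ _ _ nbot) [].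
- by move=> q r s nbot /(S_par _ _ _ nbot) [].
Qed.

Lemma dep_bot y : dep y bot -> y = bot.
Proof.
move=> dep_y; apply: (@down_closed_steps (eq^~ bot) _ _ _ bot y _ dep_y) => //=.
- by move=> q r s + Eq; rewrite Eq pa_gamma_bot.
- by move=> q a ->; rewrite pa_delta_bot.
- by move=> q r s ->; rewrite pa_gamma_bot.
Qed.

Lemma dep_top y : dep y top -> y = top \/ y = bot.
Proof.
move=> dep_y; apply: (@down_closed_steps (fun q => q = top \/ q = bot) _ _ _ top y _ dep_y);
  last by left.
- by move=> q r s + [Eq|Eq]; rewrite Eq ?pa_gamma_top ?pa_gamma_bot.
- by move=> q a [->|->]; right; rewrite ?pa_delta_top ?pa_delta_bot.
- by move=> q r s [->|->]; right; rewrite ?pa_gamma_top ?pa_gamma_bot.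
Qed.

Lemma dep_support q r : dep r q -> Defs.support q r.
Proof. by move=> rq S S_closed Sq; apply: S_closed Sq rq. Qed.

Lemma trace_bot U y : trace bot U y -> y = bot.
Proof.
suff trace_bot x : trace x U y -> x = bot -> y = bot by move/trace_bot; apply.
elim=> {x U y} //.
- by move=> q a U _ ->; rewrite pa_delta_bot.
- by move=> q q'' q' U V W _ IH1 _ IH2 _ /IH1 /IH2.
- by move=> q r r' s s' U V W _ _ _ _ _ _ _ ->; rewrite pa_gamma_bot.
Qed.

Lemma pa_lang_bot U : ~ L bot U.
Proof. by case=> y [Fy /trace_bot By]; apply: (@pa_bot_nfinal _ A); rewrite -By. Qed.

Lemma trace_iso_closed x y U U' : lp_iso U' U -> trace x U y -> trace x U' y.
Proof.
move=> U'U tr; case: tr U'U => {x U y}.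
- by move=> q U UU U'U; apply: tr_unit; apply: lp_iso_trans UU.
- by move=> q a U UU U'U; apply: tr_atom; apply: lp_iso_trans UU.
- by move=> q q'' q' U V W trV trW UU U'U; apply: tr_seq trV trW _; apply: lp_iso_trans UU.
- move=> q r r' s s' U V W trV Fr trW Fs UU U'U.
  by apply: tr_par trV Fr trW Fs _; apply: lp_iso_trans UU.
Qed.

Lemma pa_lang_iso_closed x : iso_closed (L x).
Proof. by move=> U V UV [y [Fy tr]]; exists y; split=> //; apply: trace_iso_closed tr. Qed.

Lemma pa_lang_trace_seq x y V W U :
  trace x V y -> L y W -> lp_iso U (lp_seq V W) -> L x U.
Proof. by move=> trV [y' [Fy' trW]] UVW; exists y'; split=> //; apply: tr_seq trV trW UVW. Qed.


Lemma dep_recursive x y : recursive x -> dep y x ->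
  [\/ y = x, y = top, y = bot | exists2 r, sdep r x & dep y r].
Proof.
case=> _ _ delta_x gamma_x dep_y.
pose S y := [\/ y = x, y = top, y = bot | exists2 r, sdep r x & dep y r].
apply: (@down_closed_steps S _ _ _ x y _ dep_y); last exact: Or41.
- move=> q r s nbot [Eq|Eq|Eq|[r0 r0_x q_r0]].
  + rewrite Eq in nbot; have [-> r_x _] := gamma_x _ _ nbot.
    by split; [apply: Or44; exists r => //; apply: dep_refl|apply: Or41].
  + by rewrite Eq pa_gamma_top in nbot.
  + by rewrite Eq pa_gamma_bot in nbot.
  + split; apply: Or44; exists r0 => //; apply: dep_trans q_r0.
    * exact: dep_left nbot.
    * exact: dep_right nbot.
- move=> q a [->|->|->|[r0 r0_x q_r0]].
  + by rewrite delta_x; apply: Or43.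
  + by rewrite pa_delta_top; apply: Or43.
  + by rewrite pa_delta_bot; apply: Or43.
  + by apply: Or44; exists r0 => //; apply: dep_trans q_r0; apply: dep_delta.
- move=> q r s [->|->|->|[r0 r0_x q_r0]].
  + case: (classic (gamma x r s = bot)) => [->|nbot]; first exact: Or43.
    by have [_ _ ->] := gamma_x _ _ nbot; apply: Or42.
  + by rewrite pa_gamma_top; apply: Or43.
  + by rewrite pa_gamma_bot; apply: Or43.
  + by apply: Or44; exists r0 => //; apply: dep_trans q_r0; apply: dep_gamma.
Qed.

Lemma trace_top U y : trace top U y -> y = bot \/ (y = top /\ lang_unit U).
Proof.
suff trace_top x : trace x U y -> x = top -> y = bot \/ (y = top /\ lang_unit U).
  by move/trace_top; apply.
elim=> {x U y}.
- by move=> q U U1 ->; right.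
- by move=> q a U _ ->; left; rewrite pa_delta_top.
- move=> q q'' q' U V W _ IHV trW IHW UVW /IHV [Eb|[Et V1]].
    by move: trW; rewrite Eb => /trace_bot; left.
  have [->|[-> W1]] := IHW Et; [by left|right; split=> //].
  apply: lp_iso_trans UVW _; apply: lp_iso_trans (lp_iso_seq V1 W1) _.
  exact: lp_seq1l.
- by move=> q r r' s s' U V W _ _ _ _ _ _ _ ->; left; rewrite pa_gamma_top.
Qed.

Definition rec_body p : lang Sigma := fun U => exists r, gamma p r p <> bot /\ L r U.

Lemma trace_recursive p U y : recursive p -> trace p U y ->
  [\/ y = bot, y = p /\ lang_unit U
    | y = top /\ exists n, lang_parpow (rec_body p) n.+1 U].
Proof.
case=> _ _ delta_p gamma_p.
suff trace_rec x : trace x U y -> x = p -> [\/ y = bot, y = p /\ lang_unit U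
    | y = top /\ exists n, lang_parpow (rec_body p) n.+1 U].
  by move/trace_rec; apply.
elim=> {x U y}.
- by move=> q U U1 ->; apply: Or32.
- by move=> q a U _ ->; rewrite delta_p; apply: Or31.
- move=> q q'' q' U V W _ IHV trW IHW UVW /IHV [Eb|[Ep V1]|[Et [n Vn]]].
  + by move: trW; rewrite Eb => /trace_bot ->; apply: Or31.
  + have UW : lp_iso U W.
      apply: lp_iso_trans UVW _; apply: lp_iso_trans (lp_iso_seql _ V1) _.
      exact: lp_seq1l.
    case: (IHW Ep) => [->|[-> W1]|[-> [m Wm]]].
    * exact: Or31.
    * by apply: Or32; split=> //; apply: lp_iso_trans UW W1.
    * by apply: Or33; split=> //; exists m; apply: lang_parpow_iso_closed UW Wm.
  + move: trW; rewrite Et => /trace_top [->|[-> W1]]; first exact: Or31.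
    apply: Or33; split=> //; exists n; apply: lang_parpow_iso_closed Vn.
    apply: lp_iso_trans UVW _; apply: lp_iso_trans (lp_iso_seqr _ W1) _.
    exact: lp_seq1r.
- move=> q r r' s s' U V W trV _ Fr trW IHW Fs UVW ->.
  case: (classic (gamma p r s = bot)) => [->|nbot]; first exact: Or31.
  have [Es _ ->] := gamma_p _ _ nbot; subst s.
  have Vb : rec_body p V by exists r; split=> //; exists r'.
  apply: Or33; split=> //.
  case: (IHW erefl) => [Eb|[_ W1]|[_ [m Wm]]].
  + by move: Fs; rewrite Eb => /pa_bot_nfinal.
  + by exists 0, V, W.
  + by exists m.+1, V, W.
Qed.

Lemma pa_lang_recursive p : recursive p -> lang_eq (L p) (lang_dagger (rec_body p)).
Proof.
move=> rec_p; have [Fp _ _ gamma_p] := rec_p; move=> U; split.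
- case=> y [Fy /(trace_recursive rec_p) [Eb|[_ U1]|[_ [n Un]]]].
  + by move: Fy; rewrite Eb => /pa_bot_nfinal.
  + by exists 0.
  + by exists n.+1.
- case=> n; elim: n U => [|n IHn] U /=.
    by move=> U1; exists p; split=> //; apply: tr_unit.
  case=> V [W [[r [nbot [r' [Fr' trV]]]] /IHn [s' [Fs' trW]] UVW]].
  exists (gamma p r p); split; last exact: tr_par trV Fr' trW Fs' UVW.
  by have [_ _ ->] := gamma_p _ _ nbot; apply: pa_top_final.
Qed.


Definition scc p x := dep x p /\ dep p x.

Lemma sdep_scc p x r : scc p x -> sdep r x -> sdep r p.
Proof.
case=> x_p p_x [r_x nx_r]; split; first exact: dep_trans r_x x_p.
by move=> p_r; apply: nx_r; apply: dep_trans p_r.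
Qed.

Lemma scc_nbot p y : p <> bot -> scc p y -> y <> bot.
Proof. by move=> p_nbot [_ p_y] Ey; apply: p_nbot; apply: dep_bot; rewrite -Ey. Qed.

Lemma scc_sequential p x :
  well_nested A -> sequential p -> p <> bot -> scc p x -> sequential x.
Proof.
move=> WN seq_p p_nbot [x_p p_x]; case: (WN x) => // rec_x.
case: (dep_recursive rec_x p_x) => [Ep|Ep|Ep|[r [r_x nx_r] p_r]].
- by case: rec_x => _ + _ _; rewrite -Ep.
- rewrite Ep in x_p; case: (dep_top x_p) => Ex; rewrite Ex in rec_x *.
    by move=> r s; rewrite pa_gamma_top.
  by case: rec_x => /pa_bot_nfinal.
- by [].
- by case: nx_r; apply: dep_trans x_p p_r.
Qed.

Definition step_lang x y : lang Sigma := fun U =>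
  (exists a, delta x a = y /\ lp_iso U (lp_atom a)) \/
  (exists r s, gamma x r s = y /\ lang_par (L r) (L s) U).

Lemma step_lang_trace x y V : step_lang x y V -> trace x V y.
Proof.
case=> [[a [<- Va]]|[r [s [<- [V1 [V2 [[r' [Fr' tr1]] [s' [Fs' tr2]] VV]]]]]]].
- exact: tr_atom.
- exact: tr_par tr1 Fr' tr2 Fs' VV.
Qed.

Lemma step_lang_dep x y V : step_lang x y V -> dep y x.
Proof. by case=> [[a [<- _]]|[r [s [<- _]]]]; [apply: dep_delta|apply: dep_gamma]. Qed.

Definition scc_lab p x y : lang Sigma := fun U => (scc p x /\ scc p y) /\ step_lang x y U.

Definition scc_out p x : lang Sigma := fun U =>
  scc p x /\ lang_union (fun U => F x /\ lang_unit U)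
    (fun U => exists y, (sdep y p /\ y <> bot) /\ lang_seq (step_lang x y) (L y) U) U.

Lemma scc_out_iso_closed p x : iso_closed (scc_out p x).
Proof.
move=> U U' UU' [scc_x [[Fx U'1]|[y [y_p U'y]]]]; split=> //.
  by left; split=> //; apply: lp_iso_trans UU' U'1.
by right; exists y; split=> //; apply: lang_seq_iso_closed UU' U'y.
Qed.

Section StronglyConnectedComponent.
Variables (p : Q) (l : seq Q).
Hypothesis cover : forall r, dep r p -> List.In r l.
Local Notation path := (path_lang l (scc_lab p) (scc_out p)).

Lemma path_scc_sound x U : path x U -> L x U.
Proof.
elim=> {x U} [x U [_ [[Fx U1]|[y [_ [V [W [Vs Wy UVW]]]]]]]|x y V W U _ [_ Vs] _ IH UVW].
- by exists x; split=> //; apply: tr_unit.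
- exact: pa_lang_trace_seq (step_lang_trace Vs) Wy UVW.
- exact: pa_lang_trace_seq (step_lang_trace Vs) IH UVW.
Qed.

Let good z W := L z W /\ (scc p z -> path z W).

Lemma step_good x z V W U :
  step_lang x z V -> good z W -> lp_iso U (lp_seq V W) -> good x U.
Proof.
move=> step [Lz path_z] UVW; split=> [|scc_x].
  exact: pa_lang_trace_seq (step_lang_trace step) Lz UVW.
case: (classic (scc p z)) => [scc_z|nscc_z].
  exact: path_step (cover scc_z.1) (conj (conj scc_x scc_z) step) (path_z scc_z) UVW.
apply: path_out; split=> //; right; exists z; split; last by exists V, W.
split; last by move=> Ez; apply: (@pa_lang_bot W); rewrite -Ez.
split; first exact: dep_trans (step_lang_dep step) scc_x.1.
by move=> p_z; apply: nscc_z; split=> //; apply: dep_trans (step_lang_dep step) scc_x.1.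
Qed.

Lemma trace_good x V z :
  trace x V z -> forall W U, good z W -> lp_iso U (lp_seq V W) -> good x U.
Proof.
elim=> {x V z}.
- move=> q V V1 W U [Lq path_q] UVW.
  have UW : lp_iso U W.
    apply: lp_iso_trans UVW _; apply: lp_iso_trans (lp_iso_seql _ V1) _.
    exact: lp_seq1l.
  split; first exact: pa_lang_iso_closed UW Lq.
  by move/path_q; apply: path_lang_iso_closed UW; apply: scc_out_iso_closed.
- by move=> q a V Va W U; apply: step_good; left; exists a.
- move=> q q'' q' V V1 V2 _ IH1 _ IH2 VV W U good_W UVW.
  apply: (IH1 (lp_seq V2 W)); first exact: IH2 good_W (lp_iso_refl _).
  apply: lp_iso_trans UVW _; apply: lp_iso_trans (lp_iso_seql _ VV) _.
  exact: lp_seqA.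
- move=> q r r' s s' V V1 V2 tr1 _ Fr' tr2 _ Fs' VV W U.
  apply: step_good; right; exists r, s; split=> //.
  by exists V1, V2; split=> //; [exists r'|exists s'].
Qed.

Lemma pa_lang_scc_path : lang_eq (L p) (path p).
Proof.
move=> U; split; last exact: path_scc_sound.
case=> y [Fy tr].
have good_y : good y (lp_unit Sigma).
  split; first by exists y; split=> //; apply: tr_unit; apply: lp_iso_refl.
  by move=> scc_y; apply: path_out; split=> //; left; split=> //; apply: lp_iso_refl.
have [_ path_p] := trace_good tr good_y (lp_iso_sym (lp_seq1r U)).
by apply: path_p; split; apply: dep_refl.
Qed.

Hypotheses (WN : well_nested A) (seq_p : sequential p) (p_nbot : p <> bot).
Hypothesis IH : forall r, sdep r p -> expressible (L r).

Lemma scc_gamma_sdep x r s : scc p x -> gamma x r s <> bot -> sdep r p /\ sdep s p.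
Proof.
move=> scc_x nbot; have [r_x s_x] := scc_sequential WN seq_p p_nbot scc_x nbot.
by split; apply: sdep_scc scc_x _.
Qed.

Lemma step_lang_expressible x y : scc p x -> y <> bot -> expressible (step_lang x y).
Proof.
move=> scc_x y_nbot.
have atoms : expressible (fun U => exists a, delta x a = y /\ lp_iso U (lp_atom a)).
  apply: (expressible_bigcup (xs := enum Sigma)) => a _; last exact: expressible_atom.
  by apply: mem_In; rewrite mem_enum.
have pars : expressible (fun U =>
    exists rs : Q * Q, gamma x rs.1 rs.2 = y /\ lang_par (L rs.1) (L rs.2) U).
  apply: (expressible_bigcup (xs := List.list_prod l l)) => -[r s] /= Exy;
    have /(scc_gamma_sdep scc_x) [r_p s_p] : gamma x r s <> bot by rewrite Exy.
  - exact: List.in_prod (cover r_p.1) (cover s_p.1).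
  - by apply: expressible_par; apply: IH.
apply: expressible_eq (expressible_union atoms pars) => U; split.
- by case=> [atom|[[r s] par]]; [left|right; exists r, s].
- by case=> [atom|[r [s par]]]; [left|right; exists (r, s)].
Qed.

Lemma scc_lab_expressible x y : expressible (scc_lab p x y).
Proof.
apply: expressible_guard => -[scc_x scc_y].
exact: step_lang_expressible scc_x (scc_nbot p_nbot scc_y).
Qed.

Lemma scc_out_expressible x : expressible (scc_out p x).
Proof.
apply: expressible_guard => scc_x; apply: expressible_union.
  by apply: expressible_guard => _; apply: expressible_unit.
apply: (expressible_bigcup (xs := l)) => y [y_p y_nbot]; first exact: cover y_p.1.
by apply: expressible_seq; [apply: step_lang_expressible|apply: IH].
Qed.

Lemma pa_lang_expressible_sequential : expressible (L p).
Proof.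
apply: expressible_eq (lang_eq_sym pa_lang_scc_path) _.
exact: path_lang_expressible scc_lab_expressible scc_out_expressible p.
Qed.

End StronglyConnectedComponent.

Lemma pa_lang_expressible_recursive p l : recursive p ->
  (forall r, dep r p -> List.In r l) -> (forall r, sdep r p -> expressible (L r)) ->
  expressible (L p).
Proof.
move=> rec_p cover IH; have [_ _ _ gamma_p] := rec_p.
apply: expressible_eq (lang_eq_sym (pa_lang_recursive rec_p)) (expressible_dagger _).
by apply: (expressible_bigcup (xs := l)) => r /gamma_p [_ r_p _]; [apply: cover r_p.1|apply: IH].
Qed.

Lemma pa_lang_expressible_of_sdep p l : well_nested A ->
  (forall r, dep r p -> List.In r l) -> (forall r, sdep r p -> expressible (L r)) ->
  expressible (L p).
Proof.
move=> WN cover IH; case: (classic (p = bot)) => [->|p_nbot].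
  by apply: expressible_eq (expressible_empty _) => U; split=> [[]|/pa_lang_bot].
case: (WN p) => [seq_p|rec_p].
- exact: pa_lang_expressible_sequential cover WN seq_p p_nbot IH.
- exact: pa_lang_expressible_recursive rec_p cover IH.
Qed.

End PomsetAutomaton.

Definition prop_bool (P : Prop) : bool := if excluded_middle_informative P then true else false.

Lemma prop_boolP (P : Prop) : reflect P (prop_bool P).
Proof. by rewrite /prop_bool; case: excluded_middle_informative => ?; constructor. Qed.

Lemma count_lt_subpred (T : Type) (a b : pred T) (s : seq T) x :
  subpred a b -> List.In x s -> b x -> ~~ a x -> count a s < count b s.
Proof.
move=> sub_ab; elim: s => //= y s IH [<-|x_s] bx nax.
  by rewrite bx (negbTE nax) add0n add1n ltnS sub_count.
apply: leq_ltn_trans (leq_add (_ : a y <= b y) (leqnn _)) _.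
  by case ay: (a y); rewrite // (sub_ab _ ay).
by rewrite ltn_add2l IH.
Qed.

Lemma finite_down_strict_ind (T : Type) (R : T -> T -> Prop) (l : seq T) (P : T -> Prop) x0 :
  (forall x y z, R x y -> R y z -> R x z) -> (forall x, R x x0 -> List.In x l) ->
  (forall x, R x x0 -> (forall y, R y x -> ~ R x y -> P y) -> P x) ->
  R x0 x0 -> P x0.
Proof.
move=> R_trans cover IH R_x0.
pose below x := count (fun y => prop_bool (R y x /\ ~ R x y)) l.
suff ind k x : R x x0 -> below x < k -> P x by exact: ind _ x0 R_x0 (ltnSn _).
elim: k x => [//|k IHk] x R_x below_x; apply: IH => // y R_yx nR_xy.
apply: IHk; first exact: R_trans R_yx R_x.
rewrite ltnS in below_x; apply: leq_trans below_x.
apply: (count_lt_subpred (x := y)).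
- move=> z /prop_boolP [R_zy nR_yz]; apply/prop_boolP; split; first exact: R_trans R_zy R_yx.
  by move=> R_xz; apply: nR_yz; apply: R_trans R_xz.
- exact: cover (R_trans _ _ _ R_yx R_x).
- exact/prop_boolP.
- by apply/prop_boolP => -[].
Qed.

Theorem mainTheorem1 (Sigma : finType) (A : PA Sigma) :
  well_nested A -> finitely_supported A ->
  forall q : pa_state A, exists e : spr Sigma,
    forall U : lposet Sigma, spr_sem e U <-> pa_lang q U.
Proof.
move=> WN FS q0; have [l support_l] := FS q0.
have cover r : dep r q0 -> List.In r l by move/dep_support/support_l.
suff [e E] : expressible (pa_lang q0) by exists e.
apply: (@finite_down_strict_ind _ _ l (fun q => expressible (pa_lang q)) _ (@dep_trans _ A)
  cover _ (dep_refl q0)) => p p_q0 IH.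
apply: (pa_lang_expressible_of_sdep (l := l) WN) => [r r_p|r [r_p p_nr]].
- exact: cover (dep_trans r_p p_q0).
- exact: IH.
Qed.
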